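(* Let $\mathcal{H}$ be a separable complex Hilbert space, $A\in\mathcal{B}(\mathcal{H})$, and $g\in\mathrm{ran}A$. Let $(u_n)_{n\in\mathbb{N}}$ and $(v_n)_{n\in\mathbb{N}}$ be orthonormal bases of $\mathcal{H}$, and for each $N$ let $A_N$ and $g_N$ be as defined in the context. Then there exists a sequence $(f^{(N)})_{N\in\mathbb{N}}$ with $f^{(N)}\in\mathbb{C}^N$ for each $N$ such that \[\lim_{N\to\infty}\|A_Nf^{(N)}-g_N\|_{\mathbb{C}^N}=0.\]
   Context: For orthonormal bases $(u_n)$, $(v_n)$ of $\mathcal{H}$ and $N\in\mathbb{N}$: $A_N$ is the $N\times N$ matrix with entries $(A_N)_{ij}=\langle v_i,Au_j\rangle$ for $i,j\in\{1,\dots,N\}$, and $g_N=(\langle v_1,g\rangle,\dots,\langle v_N,g\rangle)\in\mathbb{C}^N$. The inner product is antilinear in the first entry. $\mathcal{B}(\mathcal{H})$ denotes the bounded everywhere defined linear operators on $\mathcal{H}$. *)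

From Stdlib Require Import Reals.
Open Scope R_scope.

Record Cplx := mkC { Re : R; Im : R }.

Definition C0 : Cplx := mkC 0 0.
Definition C1 : Cplx := mkC 1 0.
Definition Cadd (z w : Cplx) : Cplx := mkC (Re z + Re w) (Im z + Im w).
Definition Copp (z : Cplx) : Cplx := mkC (- Re z) (- Im z).
Definition Csub (z w : Cplx) : Cplx := Cadd z (Copp w).
Definition Cmul (z w : Cplx) : Cplx :=
  mkC (Re z * Re w - Im z * Im w) (Re z * Im w + Im z * Re w).
Definition Cconj (z : Cplx) : Cplx := mkC (Re z) (- Im z).
Definition Cnorm2 (z : Cplx) : R := Re z * Re z + Im z * Im z.
Definition Cnorm (z : Cplx) : R := sqrt (Cnorm2 z).

Fixpoint Csum (n : nat) (f : nat -> Cplx) : Cplx :=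
  match n with O => C0 | S m => Cadd (Csum m f) (f m) end.
Fixpoint Rsum (n : nat) (f : nat -> R) : R :=
  match n with O => 0 | S m => Rsum m f + f m end.

(** * Complex Hilbert spaces
    Inner product antilinear in the first argument, linear in the second. *)
Record CHilbert := {
  hv :> Type;
  hzero : hv;
  hadd : hv -> hv -> hv;
  hscal : Cplx -> hv -> hv;
  hinner : hv -> hv -> Cplx;
  hadd_assoc : forall x y z, hadd x (hadd y z) = hadd (hadd x y) z;
  hadd_comm : forall x y, hadd x y = hadd y x;
  hadd_zero : forall x, hadd x hzero = x;
  hadd_opp : forall x, hadd x (hscal (Copp C1) x) = hzero;
  hscal_one : forall x, hscal C1 x = x;
  hscal_assoc : forall a b x, hscal a (hscal b x) = hscal (Cmul a b) x;
  hscal_distr_v : forall a x y, hscal a (hadd x y) = hadd (hscal a x) (hscal a y);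
  hscal_distr_s : forall a b x, hscal (Cadd a b) x = hadd (hscal a x) (hscal b x);
  hinner_add_r : forall x y z, hinner x (hadd y z) = Cadd (hinner x y) (hinner x z);
  hinner_scal_r : forall a x y, hinner x (hscal a y) = Cmul a (hinner x y);
  hinner_conj : forall x y, hinner y x = Cconj (hinner x y);
  hinner_pos : forall x, Im (hinner x x) = 0 /\ 0 <= Re (hinner x x);
  hinner_def : forall x, hinner x x = C0 -> x = hzero;
  hcomplete : forall s : nat -> hv,
    (forall eps, 0 < eps -> exists N, forall m n, (N <= m)%nat -> (N <= n)%nat ->
       sqrt (Re (hinner (hadd (s m) (hscal (Copp C1) (s n)))
                        (hadd (s m) (hscal (Copp C1) (s n))))) < eps) ->
    exists l, forall eps, 0 < eps -> exists N, forall n, (N <= n)%nat ->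
       sqrt (Re (hinner (hadd (s n) (hscal (Copp C1) l))
                        (hadd (s n) (hscal (Copp C1) l)))) < eps
}.

Arguments hzero {_}.
Arguments hadd {_} _ _.
Arguments hscal {_} _ _.
Arguments hinner {_} _ _.

Section HilbertDefs.
Variable H : CHilbert.

Definition hsub (x y : H) : H := hadd x (hscal (Copp C1) y).
Definition hnorm (x : H) : R := sqrt (Re (hinner x x)).

Definition separable : Prop :=
  exists d : nat -> H, forall (x : H) (eps : R), 0 < eps ->
    exists n, hnorm (hsub x (d n)) < eps.

Definition bounded_linear (A : H -> H) : Prop :=
  (forall x y, A (hadd x y) = hadd (A x) (A y)) /\
  (forall a x, A (hscal a x) = hscal a (A x)) /\
  (exists M, forall x, hnorm (A x) <= M * hnorm x).

Definition in_range (A : H -> H) (g : H) : Prop := exists f, A f = g.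

Definition orthonormal_basis (u : nat -> H) : Prop :=
  (forall i j, hinner (u i) (u j) = if Nat.eqb i j then C1 else C0) /\
  (forall x, (forall n, hinner (u n) x = C0) -> x = hzero).

(** The truncated matrix A_N and vector g_N (indices shifted to 0 .. N-1):
    (A_N)_{ij} = <v_i, A u_j>, (g_N)_i = <v_i, g>.  A vector of C^N is
    represented by f : nat -> C, of which only the entries 0 .. N-1 are used. *)
Definition trunc_mat (A : H -> H) (u v : nat -> H) (i j : nat) : Cplx :=
  hinner (v i) (A (u j)).
Definition trunc_vec (g : H) (v : nat -> H) (i : nat) : Cplx := hinner (v i) g.

Definition trunc_residual (A : H -> H) (u v : nat -> H) (g : H)
    (N : nat) (f : nat -> Cplx) : R :=
  sqrt (Rsum N (fun i =>
    Cnorm2 (Csub (Csum N (fun j => Cmul (trunc_mat A u v i j) (f j)))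
                 (trunc_vec g v i)))).

End HilbertDefs.

Arguments hsub {_} _ _.
Arguments hnorm {_} _.

(* Write g = A f and take f^(N) to be the first N Fourier coefficients <u_j, f>
   of f.  Then the i-th entry of A_N f^(N) - g_N is <v_i, A (S_N - f)>, where
   S_N is the N-th partial Fourier sum of f, so by Bessel's inequality the
   residual is at most ||A (S_N - f)|| <= ||A|| ||S_N - f||.  The partial sums
   are Cauchy by Bessel's inequality, converge by completeness, and their limit
   is f because the basis (u_n) is maximal. *)
From Pilot Require Import Defs.
From Stdlib Require Import Reals Lra Lia Arith.
Open Scope R_scope.

Lemma Cplx_ext (z w : Cplx) : Re z = Re w -> Im z = Im w -> z = w.
Proof. destruct z, w; simpl; intros; subst; reflexivity. Qed.

Ltac Cplx_unfold :=
  unfold Csub, Cadd, Copp, Cmul, Cconj, Cnorm2, C0, Defs.C1 in *; simpl in *.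
Ltac Cplx_ring := apply Cplx_ext; Cplx_unfold; ring.

Lemma Cnorm2_nonneg (z : Cplx) : 0 <= Cnorm2 z.
Proof. unfold Cnorm2; nra. Qed.

Lemma Cnorm2_eq0 (z : Cplx) : Cnorm2 z = 0 -> z = C0.
Proof. destruct z as [x y]; unfold Cnorm2; simpl; intro E; apply Cplx_ext; simpl; nra. Qed.

Lemma Rsum_ext (N : nat) (f g : nat -> R) :
  (forall j, (j < N)%nat -> f j = g j) -> Rsum N f = Rsum N g.
Proof. induction N; simpl; intros E; auto. rewrite IHN, E; auto. Qed.

Lemma Csum_ext (N : nat) (f g : nat -> Cplx) :
  (forall j, (j < N)%nat -> f j = g j) -> Csum N f = Csum N g.
Proof. induction N; simpl; intros E; auto. rewrite IHN, E; auto. Qed.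

Lemma Re_Csum (N : nat) (f : nat -> Cplx) : Re (Csum N f) = Rsum N (fun j => Re (f j)).
Proof. induction N; simpl; auto. rewrite IHN; reflexivity. Qed.

Lemma Rsum_nonneg (N : nat) (f : nat -> R) : (forall j, 0 <= f j) -> 0 <= Rsum N f.
Proof. intros Hf; induction N; simpl; [lra|]. specialize (Hf N). lra. Qed.

Lemma Rsum_le_mono (f : nat -> R) (n m : nat) :
  (forall j, 0 <= f j) -> (n <= m)%nat -> Rsum n f <= Rsum m f.
Proof. intros Hf Hnm; induction Hnm; simpl; [lra|]. specialize (Hf m). lra. Qed.

Lemma sqrt_lt_sqr (x e : R) : 0 <= x -> 0 < e -> x < e * e -> sqrt x < e.
Proof. intros. rewrite <- (sqrt_square e) by lra. apply sqrt_lt_1_alt; lra. Qed.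

Section Hilbert.
Variable H : CHilbert.

Definition hnorm2 (x : H) : R := Re (hinner x x).

Lemma hnorm2_nonneg (x : H) : 0 <= hnorm2 x.
Proof. apply (hinner_pos H x). Qed.

Lemma hinner_zero_r (x : H) : hinner x hzero = C0.
Proof.
  assert (E : hinner x hzero = Cadd (hinner x hzero) (hinner x hzero)).
  { rewrite <- hinner_add_r, hadd_zero. reflexivity. }
  revert E; generalize (hinner x hzero); intros [a b] E.
  unfold Cadd in E; simpl in E. injection E; intros. apply Cplx_ext; simpl; lra.
Qed.

Lemma hinner_zero_l (x : H) : hinner hzero x = C0.
Proof. rewrite (hinner_conj H x hzero), hinner_zero_r. Cplx_ring. Qed.

Lemma hinner_add_l (x y z : H) : hinner (hadd x y) z = Cadd (hinner x z) (hinner y z).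
Proof.
  rewrite (hinner_conj H z (hadd x y)), hinner_add_r, (hinner_conj H z x),
    (hinner_conj H z y).
  Cplx_ring.
Qed.

Lemma hinner_scal_l (a : Cplx) (x z : H) :
  hinner (hscal a x) z = Cmul (Cconj a) (hinner x z).
Proof. rewrite (hinner_conj H z (hscal a x)), hinner_scal_r, (hinner_conj H z x). Cplx_ring. Qed.

Lemma hinner_sub_r (x y z : H) : hinner x (hsub y z) = Csub (hinner x y) (hinner x z).
Proof. unfold hsub. rewrite hinner_add_r, hinner_scal_r. Cplx_ring. Qed.

Lemma hnorm2_sub (x y : H) : hnorm2 (hsub x y) = hnorm2 x - 2 * Re (hinner x y) + hnorm2 y.
Proof.
  unfold hnorm2, hsub.
  rewrite hinner_add_r, !hinner_add_l, !hinner_scal_r, !hinner_scal_l, (hinner_conj H x y).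
  destruct (hinner_pos H y) as [Hy _].
  revert Hy; generalize (hinner y y) (hinner x y) (hinner x x); intros p q r Hy.
  destruct p, q, r; Cplx_unfold; subst; ring.
Qed.

Lemma hnorm2_sub_comm (x y : H) : hnorm2 (hsub x y) = hnorm2 (hsub y x).
Proof. rewrite !hnorm2_sub, (hinner_conj H x y). simpl. ring. Qed.

Lemma hadd_idem_zero (x : H) : hadd x x = x -> x = hzero.
Proof.
  intros E. rewrite <- (hadd_opp H x). rewrite <- E at 2.
  rewrite <- hadd_assoc, hadd_opp, hadd_zero. reflexivity.
Qed.

Lemma hsub_eq0 (x y : H) : hsub x y = hzero -> x = y.
Proof.
  unfold hsub; intros E.
  rewrite <- (hadd_zero H x), <- (hadd_opp H y), (hadd_comm H y), hadd_assoc, E,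
    hadd_comm, hadd_zero.
  reflexivity.
Qed.

Fixpoint hlincomb (N : nat) (c : nat -> Cplx) (e : nat -> H) : H :=
  match N with O => hzero | S m => hadd (hlincomb m c e) (hscal (c m) (e m)) end.

Lemma linear_hlincomb (A : H -> H)
  (Aadd : forall x y, A (hadd x y) = hadd (A x) (A y))
  (Ascal : forall a x, A (hscal a x) = hscal a (A x)) N c e :
  A (hlincomb N c e) = hlincomb N c (fun j => A (e j)).
Proof.
  induction N; simpl.
  - apply hadd_idem_zero. rewrite <- Aadd, hadd_zero. reflexivity.
  - rewrite Aadd, Ascal, IHN. reflexivity.
Qed.

Lemma hinner_hlincomb_r (x : H) N c e :
  hinner x (hlincomb N c e) = Csum N (fun j => Cmul (c j) (hinner x (e j))).
Proof.
  induction N; simpl; [apply hinner_zero_r|].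
  rewrite hinner_add_r, hinner_scal_r, IHN. reflexivity.
Qed.

Lemma hinner_hlincomb_l (x : H) N c e :
  hinner (hlincomb N c e) x = Csum N (fun j => Cmul (Cconj (c j)) (hinner (e j) x)).
Proof.
  induction N; simpl; [apply hinner_zero_l|].
  rewrite hinner_add_l, hinner_scal_l, IHN. reflexivity.
Qed.

Definition orthonormal (e : nat -> H) : Prop :=
  forall i j, hinner (e i) (e j) = if Nat.eqb i j then Defs.C1 else C0.

Section Orthonormal.
Variable e : nat -> H.
Hypothesis e_on : orthonormal e.

Lemma hinner_hlincomb_basis k N c :
  hinner (e k) (hlincomb N c e) = if Nat.ltb k N then c k else C0.
Proof.
  rewrite hinner_hlincomb_r. induction N; simpl; [reflexivity|].
  rewrite IHN, e_on.
  destruct (Nat.ltb_spec k N), (Nat.eqb_spec k N), (Nat.ltb_spec k (S N));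
    try lia; subst; Cplx_ring.
Qed.

Lemma Re_hinner_hlincomb n m c : (n <= m)%nat ->
  Re (hinner (hlincomb m c e) (hlincomb n c e)) = Rsum n (fun j => Cnorm2 (c j)).
Proof.
  intros Hnm. rewrite hinner_hlincomb_r, Re_Csum. apply Rsum_ext; intros j Hj.
  rewrite (hinner_conj H (e j)), hinner_hlincomb_basis.
  destruct (Nat.ltb_spec j m); try lia. Cplx_unfold; ring.
Qed.

Lemma hnorm2_hlincomb N c : hnorm2 (hlincomb N c e) = Rsum N (fun j => Cnorm2 (c j)).
Proof. apply Re_hinner_hlincomb; lia. Qed.

Definition fourier_coef (x : H) (j : nat) : Cplx := hinner (e j) x.
Definition fourier_sum (x : H) (N : nat) : H := hlincomb N (fourier_coef x) e.

(* Bessel's inequality is the nonnegativity of ||x - S_N x||^2. *)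
Lemma bessel (x : H) N : Rsum N (fun j => Cnorm2 (fourier_coef x j)) <= hnorm2 x.
Proof.
  pose proof (hnorm2_nonneg (hsub x (fourier_sum x N))) as G.
  unfold fourier_sum in G.
  rewrite hnorm2_sub, hnorm2_hlincomb, hinner_hlincomb_r, Re_Csum in G.
  rewrite (Rsum_ext N _ (fun j => Cnorm2 (fourier_coef x j))) in G; [lra|].
  intros j _. unfold fourier_coef. rewrite (hinner_conj H (e j) x). Cplx_unfold; ring.
Qed.

Lemma Cnorm2_fourier_coef_le (x : H) k : Cnorm2 (fourier_coef x k) <= hnorm2 x.
Proof.
  pose proof (bessel x (S k)) as B; simpl in B.
  pose proof (Rsum_nonneg k (fun j => Cnorm2 (fourier_coef x j)) (fun j => Cnorm2_nonneg _)).
  lra.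
Qed.

Lemma hnorm2_fourier_sum_sub (x : H) n m : (n <= m)%nat ->
  hnorm2 (hsub (fourier_sum x m) (fourier_sum x n)) =
  Rsum m (fun j => Cnorm2 (fourier_coef x j)) - Rsum n (fun j => Cnorm2 (fourier_coef x j)).
Proof.
  intros Hnm. unfold fourier_sum.
  rewrite hnorm2_sub, Re_hinner_hlincomb, !hnorm2_hlincomb by exact Hnm. ring.
Qed.

Lemma fourier_sum_cauchy (x : H) (eps : R) : 0 < eps ->
  exists N, forall m n, (N <= m)%nat -> (N <= n)%nat ->
    hnorm (hsub (fourier_sum x m) (fourier_sum x n)) < eps.
Proof.
  intros Heps.
  set (B := fun N => Rsum N (fun j => Cnorm2 (fourier_coef x j))).
  assert (B_mono : forall n m, (n <= m)%nat -> B n <= B m).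
  { intros n m; apply Rsum_le_mono; intro; apply Cnorm2_nonneg. }
  assert (B_cauchy : Cauchy_crit B).
  { apply CV_Cauchy, growing_cv.
    - intro n; apply B_mono; lia.
    - exists (hnorm2 x); intros y [n ->]; apply bessel. }
  destruct (B_cauchy (eps * eps)) as [N HN]; [nra|].
  exists N; intros m n Hm Hn.
  assert (D : forall p q, (q <= p)%nat -> (N <= q)%nat ->
             hnorm (hsub (fourier_sum x p) (fourier_sum x q)) < eps).
  { intros p q Hqp Hq. apply sqrt_lt_sqr; [apply hnorm2_nonneg | exact Heps |].
    fold (hnorm2 (hsub (fourier_sum x p) (fourier_sum x q))).
    rewrite hnorm2_fourier_sum_sub by exact Hqp.
    specialize (HN p q ltac:(lia) Hq); unfold R_dist in HN.
    rewrite Rabs_right in HN by (apply Rge_minus, Rle_ge, B_mono, Hqp). exact HN. }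
  destruct (le_lt_dec n m) as [Hnm | Hmn]; [apply D; assumption|].
  unfold hnorm; fold (hnorm2 (hsub (fourier_sum x m) (fourier_sum x n))).
  rewrite hnorm2_sub_comm. apply D; lia.
Qed.

Hypothesis e_max : forall x : H, (forall n, hinner (e n) x = C0) -> x = hzero.

Lemma fourier_sum_cvg (x : H) (eps : R) : 0 < eps ->
  exists N0, forall N, (N0 <= N)%nat -> hnorm (hsub (fourier_sum x N) x) < eps.
Proof.
  destruct (hcomplete H (fourier_sum x) (fourier_sum_cauchy x)) as [l Hl].
  enough (x = l) by (subst; exact (Hl eps)).
  apply hsub_eq0, e_max; intro k.
  apply Cnorm2_eq0, Rle_antisym; [|apply Cnorm2_nonneg].
  apply Rnot_lt_le; intro Hpos.
  destruct (Hl (sqrt (Cnorm2 (hinner (e k) (hsub x l))))) as [N0 HN0].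
  { apply sqrt_lt_R0, Hpos. }
  specialize (HN0 (max N0 (S k)) ltac:(lia)).
  apply sqrt_lt_0_alt in HN0.
  fold (hsub (fourier_sum x (max N0 (S k))) l) in HN0.
  fold (hnorm2 (hsub (fourier_sum x (max N0 (S k))) l)) in HN0.
  (* Beyond index k, the k-th coefficient of S_N x - l is that of x - l. *)
  assert (E : hinner (e k) (hsub (fourier_sum x (max N0 (S k))) l)
              = hinner (e k) (hsub x l)).
  { rewrite !hinner_sub_r. unfold fourier_sum. rewrite hinner_hlincomb_basis.
    destruct (Nat.ltb_spec k (max N0 (S k))); [reflexivity | lia]. }
  pose proof (Cnorm2_fourier_coef_le (hsub (fourier_sum x (max N0 (S k))) l) k) as B.
  unfold fourier_coef in B; rewrite E in B. lra.
Qed.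

End Orthonormal.

Lemma trunc_residual_fourier_le (A : H -> H)
  (Aadd : forall x y, A (hadd x y) = hadd (A x) (A y))
  (Ascal : forall a x, A (hscal a x) = hscal a (A x))
  (u v : nat -> H) (v_on : orthonormal v) (x : H) N :
  trunc_residual H A u v (A x) N (fourier_coef u x)
  <= hnorm (A (hsub (fourier_sum u x N) x)).
Proof.
  unfold trunc_residual.
  rewrite (Rsum_ext N _ (fun i => Cnorm2 (fourier_coef v (A (hsub (fourier_sum u x N) x)) i))).
  - apply sqrt_le_1_alt, bessel, v_on.
  - intros i _. f_equal. unfold fourier_coef, fourier_sum, trunc_vec, trunc_mat, hsub.
    rewrite Aadd, Ascal, hinner_add_r, hinner_scal_r,
      (linear_hlincomb A Aadd Ascal), hinner_hlincomb_r.
    rewrite (Csum_ext N (fun j => Cmul (hinner (v i) (A (u j))) (hinner (u j) x))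
               (fun j => Cmul (hinner (u j) x) (hinner (v i) (A (u j)))));
      [unfold fourier_coef; Cplx_ring | intros; Cplx_ring].
Qed.

End Hilbert.

Theorem lemma2p2 (H : CHilbert) (HS : separable H)
  (A : H -> H) (HA : bounded_linear H A)
  (g : H) (Hg : in_range H A g)
  (u v : nat -> H) (Hu : orthonormal_basis H u) (Hv : orthonormal_basis H v) :
  exists F : nat -> (nat -> Cplx),
    Un_cv (fun N => trunc_residual H A u v g N (F N)) 0.
Proof.
  destruct Hg as [f <-], Hu as [u_on u_max], Hv as [v_on _],
    HA as [Aadd [Ascal [M HM]]].
  exists (fun _ => fourier_coef H u f).
  intros eps Heps.
  assert (HM1 : 0 < Rabs M + 1) by (pose proof (Rabs_pos M); lra).
  destruct (fourier_sum_cvg H u u_on u_max f (eps / (Rabs M + 1))) as [N0 HN0].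
  { apply Rdiv_lt_0_compat; assumption. }
  exists N0; intros N HN; specialize (HN0 N HN).
  set (d := hsub (fourier_sum H u f N) f).
  pose proof (trunc_residual_fourier_le H A Aadd Ascal u v v_on f N) as residual_le.
  assert (bound_le : M * hnorm d <= (Rabs M + 1) * hnorm d).
  { apply Rmult_le_compat_r; [apply sqrt_pos | pose proof (Rle_abs M); lra]. }
  assert (bound_lt : (Rabs M + 1) * hnorm d < eps).
  { apply (Rmult_lt_compat_l (Rabs M + 1)) in HN0; [|exact HM1].
    replace ((Rabs M + 1) * (eps / (Rabs M + 1))) with eps in HN0 by (field; lra).
    exact HN0. }
  unfold R_dist; rewrite Rminus_0_r, Rabs_right by (apply Rle_ge, sqrt_pos).
  pose proof (HM d). fold d in residual_le. lra.
Qed.
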